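(* Let $Y=\{(x,y)\in\mathbb{R}^2:(x/a)^2+y^2=1\}$ with $1<a\le\sqrt2$. The six vertices of the two inscribed equilateral triangles $\Delta_{(\pm a,0)}$ (those with a vertex at $(a,0)$, resp. $(-a,0)$, of side length $r_1=\frac{4\sqrt3 a}{a^2+3}$) are global minima of $s:Y\to\mathbb{R}$; the six vertices of the two inscribed equilateral triangles $\Delta_{(0,\pm1)}$ (with a vertex at $(0,1)$, resp. $(0,-1)$, of side length $r_2=\frac{4\sqrt3a^2}{3a^2+1}$) are global maxima of $s$; and $s$ has no other local extrema.
   Context: For $1<a\le\sqrt2$, every $p\in Y$ is a vertex of a unique equilateral triangle (Euclidean) inscribed in $Y$; $s(p)$ denotes its side length. Explicitly $\Delta_{(a,0)}$ has vertices $(a,0)$ and $\bigl(-\frac{3a-a^3}{a^2+3},\pm\frac{2\sqrt3a}{a^2+3}\bigr)$, $\Delta_{(-a,0)}$ is its reflection in the $y$-axis, $\Delta_{(0,1)}$ has vertices $(0,1)$ and $\bigl(\pm\frac{2\sqrt3a^2}{3a^2+1},-\frac{3a^2-1}{3a^2+1}\bigr)$, and $\Delta_{(0,-1)}$ is its reflection in the $x$-axis. *)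

From Stdlib Require Import Reals Lra ClassicalEpsilon.
Open Scope R_scope.

Definition pt := (R * R)%type.

Definition onY (a : R) (p : pt) : Prop :=
  (fst p / a) ^ 2 + (snd p) ^ 2 = 1.

Definition dist (p q : pt) : R :=
  sqrt ((fst p - fst q) ^ 2 + (snd p - snd q) ^ 2).

Definition side_of (a : R) (p : pt) (r : R) : Prop :=
  exists q w : pt, onY a q /\ onY a w /\ 0 < r /\
    dist p q = r /\ dist q w = r /\ dist w p = r.

(* s(p): the side length of the (unique, for 1 < a <= sqrt 2) inscribed
   equilateral triangle with vertex p, chosen by Hilbert's epsilon. *)
Definition s (a : R) (p : pt) : R :=
  epsilon (inhabits 0) (fun r => side_of a p r).

Definition r1 (a : R) : R := 4 * sqrt 3 * a / (a ^ 2 + 3).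
Definition r2 (a : R) : R := 4 * sqrt 3 * a ^ 2 / (3 * a ^ 2 + 1).

(* The six vertices of Delta_(a,0) and Delta_(-a,0). *)
Definition min_vertex (a : R) (p : pt) : Prop :=
  p = (a, 0) \/
  p = (- ((3 * a - a ^ 3) / (a ^ 2 + 3)), 2 * sqrt 3 * a / (a ^ 2 + 3)) \/
  p = (- ((3 * a - a ^ 3) / (a ^ 2 + 3)), - (2 * sqrt 3 * a / (a ^ 2 + 3))) \/
  p = (- a, 0) \/
  p = ((3 * a - a ^ 3) / (a ^ 2 + 3), 2 * sqrt 3 * a / (a ^ 2 + 3)) \/
  p = ((3 * a - a ^ 3) / (a ^ 2 + 3), - (2 * sqrt 3 * a / (a ^ 2 + 3))).

(* The six vertices of Delta_(0,1) and Delta_(0,-1). *)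
Definition max_vertex (a : R) (p : pt) : Prop :=
  p = (0, 1) \/
  p = (2 * sqrt 3 * a ^ 2 / (3 * a ^ 2 + 1), - ((3 * a ^ 2 - 1) / (3 * a ^ 2 + 1))) \/
  p = (- (2 * sqrt 3 * a ^ 2 / (3 * a ^ 2 + 1)), - ((3 * a ^ 2 - 1) / (3 * a ^ 2 + 1))) \/
  p = (0, -1) \/
  p = (2 * sqrt 3 * a ^ 2 / (3 * a ^ 2 + 1), (3 * a ^ 2 - 1) / (3 * a ^ 2 + 1)) \/
  p = (- (2 * sqrt 3 * a ^ 2 / (3 * a ^ 2 + 1)), (3 * a ^ 2 - 1) / (3 * a ^ 2 + 1)).

Definition is_global_min (a : R) (p : pt) : Prop :=
  forall q, onY a q -> s a p <= s a q.
Definition is_global_max (a : R) (p : pt) : Prop :=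
  forall q, onY a q -> s a q <= s a p.
Definition is_local_min (a : R) (p : pt) : Prop :=
  exists eps, 0 < eps /\ forall q, onY a q -> dist p q < eps -> s a p <= s a q.
Definition is_local_max (a : R) (p : pt) : Prop :=
  exists eps, 0 < eps /\ forall q, onY a q -> dist p q < eps -> s a q <= s a p.

(* Fix p on Y. A side vector v of an inscribed equilateral triangle with vertex p
   is characterised by p + v and p + R v lying on Y, R being the rotation by
   -60 degrees. Both conditions are linear in the length of v; eliminating it
   leaves a binary cubic form in the direction of v whose discriminant is
   negative on Y when 1 < a <= sqrt 2. So that direction, and with it s(p), is
   unique, and the intermediate value theorem provides one.

   In the coordinates (x/a, y) the vertices z_0, z_1, z_2 of such a triangle lie
   on the unit circle. Being equilateral relates their Fourier coefficients by
   T = -(a+1)/(a-1) conj S, and the three conditions |z_j| = 1 then fix the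
   centroid and |S| in terms of the direction (c, s) of S. This parametrises the
   vertices by unit vectors (c, s), with side length 2 sqrt 3 a / sqrt D and
   D = (a^2+3)^2/4 - (a^2-1)^3/(4 a^2) Im((c + i s)^3)^2. Hence s increases with
   Im((c + i s)^3)^2: it is minimal where this vanishes, maximal where
   Re((c + i s)^3) vanishes, and at any other direction turning (c, s) slightly
   one way or the other makes it strictly smaller or larger. *)

From Pilot Require Import Defs.
From Stdlib Require Import Reals Lra Psatz ClassicalEpsilon.
Open Scope R_scope.

Definition cubic_form (a0 a1 a2 a3 c s : R) : R :=
  a0 * c ^ 3 + a1 * c ^ 2 * s + a2 * c * s ^ 2 + a3 * s ^ 3.

Definition cubic_disc (a0 a1 a2 a3 : R) : R :=
  a1 ^ 2 * a2 ^ 2 - 4 * a0 * a2 ^ 3 - 4 * a1 ^ 3 * a3 - 27 * a0 ^ 2 * a3 ^ 2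
  + 18 * a0 * a1 * a2 * a3.

Lemma cubic_disc_nonneg_of_roots a0 a1 a2 a3 c1 s1 c2 s2 :
  cubic_form a0 a1 a2 a3 c1 s1 = 0 -> cubic_form a0 a1 a2 a3 c2 s2 = 0 ->
  c1 * s2 - s1 * c2 <> 0 -> 0 <= cubic_disc a0 a1 a2 a3.
Proof.
  intros h1 h2 hdet.
  (* In the basis (c1,s1), (c2,s2) the form reads b1 X^2 Y + b2 X Y^2; the
     discriminant changes by det^6 and equals (b1 b2)^2 in the new basis. *)
  set (b1 := 3*a0*c1^2*c2 + a1*(c1^2*s2 + 2*c1*s1*c2) + a2*(2*c1*s1*s2 + s1^2*c2)
             + 3*a3*s1^2*s2).
  set (b2 := 3*a0*c1*c2^2 + a1*(2*c1*c2*s2 + s1*c2^2) + a2*(c1*s2^2 + 2*s1*c2*s2)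
             + 3*a3*s1*s2^2).
  assert (E : cubic_disc (cubic_form a0 a1 a2 a3 c1 s1) b1 b2 (cubic_form a0 a1 a2 a3 c2 s2)
              = (c1 * s2 - s1 * c2) ^ 6 * cubic_disc a0 a1 a2 a3)
    by (unfold cubic_disc, cubic_form, b1, b2; ring).
  rewrite h1, h2 in E.
  assert (Hsq : cubic_disc 0 b1 b2 0 = (b1 * b2) ^ 2) by (unfold cubic_disc; ring).
  assert (Hdet : 0 < (c1 * s2 - s1 * c2) ^ 6).
  { replace ((c1 * s2 - s1 * c2) ^ 6) with ((c1 * s2 - s1 * c2)² ^ 3)
      by (unfold Rsqr; ring).
    apply pow_lt, Rsqr_pos_lt; auto. }
  assert (0 <= (b1 * b2) ^ 2) by apply pow2_ge_0.
  nra.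
Qed.

Lemma sqrt3_sqr : sqrt 3 * sqrt 3 = 3.
Proof. apply sqrt_sqrt; lra. Qed.

Lemma sqrt3_pos : 0 < sqrt 3.
Proof. apply sqrt_lt_R0; lra. Qed.

Local Notation h3 := (sqrt 3 / 2).

Definition rotx (k l c s : R) : R := k * c - l * s.
Definition roty (k l c s : R) : R := l * c + k * s.

Lemma rot_norm k l c s :
  rotx k l c s ^ 2 + roty k l c s ^ 2 = (k ^ 2 + l ^ 2) * (c ^ 2 + s ^ 2).
Proof. unfold rotx, roty; ring. Qed.

Lemma rot60_norm c s :
  rotx (1/2) h3 c s ^ 2 + roty (1/2) h3 c s ^ 2 = c ^ 2 + s ^ 2.
Proof. rewrite rot_norm. field [sqrt3_sqr]. Qed.

Lemma rot_of_dot_cross k l c1 s1 c2 s2 : 0 < c1 ^ 2 + s1 ^ 2 ->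
  c1 * c2 + s1 * s2 = k * (c1 ^ 2 + s1 ^ 2) -> c1 * s2 - s1 * c2 = l * (c1 ^ 2 + s1 ^ 2) ->
  c2 = rotx k l c1 s1 /\ s2 = roty k l c1 s1.
Proof.
  unfold rotx, roty; intros n dot cross.
  split; apply (Rmult_eq_reg_l (c1 ^ 2 + s1 ^ 2)); try lra.
  - transitivity ((c1 * c2 + s1 * s2) * c1 - (c1 * s2 - s1 * c2) * s1);
      [ring | rewrite dot, cross; ring].
  - transitivity ((c1 * c2 + s1 * s2) * s1 + (c1 * s2 - s1 * c2) * c1);
      [ring | rewrite dot, cross; ring].
Qed.

Lemma rot60_of_equilateral c1 s1 c2 s2 r : 0 < r ->
  c1 ^ 2 + s1 ^ 2 = r ^ 2 -> c2 ^ 2 + s2 ^ 2 = r ^ 2 ->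
  (c1 - c2) ^ 2 + (s1 - s2) ^ 2 = r ^ 2 ->
  (c2 = rotx (1/2) h3 c1 s1 /\ s2 = roty (1/2) h3 c1 s1) \/
  (c1 = rotx (1/2) h3 c2 s2 /\ s1 = roty (1/2) h3 c2 s2).
Proof.
  intros hr E1 E2 E3.
  assert (hr2 : 0 < r ^ 2) by (apply pow_lt; lra).
  assert (dot : c1 * c2 + s1 * s2 = r ^ 2 / 2) by nra.
  assert (cross : (c1 * s2 - s1 * c2 - h3 * r ^ 2) * (c1 * s2 - s1 * c2 + h3 * r ^ 2) = 0).
  { assert (L : (c1 * s2 - s1 * c2) ^ 2 = (c1 ^ 2 + s1 ^ 2) * (c2 ^ 2 + s2 ^ 2)
                                         - (c1 * c2 + s1 * s2) ^ 2) by ring.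
    rewrite E1, E2, dot in L.
    replace ((c1 * s2 - s1 * c2 - h3 * r ^ 2) * (c1 * s2 - s1 * c2 + h3 * r ^ 2))
      with ((c1 * s2 - s1 * c2) ^ 2 - 3 / 4 * r ^ 4) by field [sqrt3_sqr].
    rewrite L; field. }
  destruct (Rmult_integral _ _ cross) as [h|h]; [left|right];
    apply rot_of_dot_cross; rewrite ?E1, ?E2; try lra.
Qed.

Lemma dist_sqr p q r : Defs.dist p q = r ->
  (fst p - fst q) ^ 2 + (snd p - snd q) ^ 2 = r ^ 2.
Proof.
  unfold Defs.dist; intros <-. rewrite pow2_sqrt; auto.
  apply Rplus_le_le_0_compat; apply pow2_ge_0.
Qed.

Lemma dist_of_sqr p q r : 0 <= r ->
  (fst p - fst q) ^ 2 + (snd p - snd q) ^ 2 = r ^ 2 -> Defs.dist p q = r.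
Proof. intros hr e. unfold Defs.dist. rewrite e. apply sqrt_pow2; auto. Qed.

(* a^2 times the quadratic form of Y and its polarisation. *)
Definition ell_q (a c s : R) : R := c ^ 2 + a ^ 2 * s ^ 2.
Definition ell_b (a x y c s : R) : R := x * c + a ^ 2 * y * s.

Lemma ell_q_pos a c s : 1 < a -> 0 < c ^ 2 + s ^ 2 -> 0 < ell_q a c s.
Proof. intros. unfold ell_q. assert (1 < a ^ 2) by nra. nra. Qed.

Definition chord (a x y c s : R) : Prop := ell_q a c s + 2 * ell_b a x y c s = 0.

Lemma onY_translate a x y c s : a <> 0 -> onY a (x, y) ->
  onY a (x + c, y + s) <-> chord a x y c s.
Proof.
  unfold onY, chord; cbn [fst snd]; intros ha h.
  assert (E : ((x + c) / a) ^ 2 + (y + s) ^ 2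
              = ((x / a) ^ 2 + y ^ 2) + (ell_q a c s + 2 * ell_b a x y c s) / a ^ 2)
    by (unfold ell_q, ell_b; field; auto).
  assert (a ^ 2 <> 0) by (apply pow_nonzero; auto).
  rewrite E, h. split; intro e.
  - apply (Rmult_eq_reg_r (/ a ^ 2)); [lra|]. apply Rinv_neq_0_compat; auto.
  - rewrite e. field; auto.
Qed.

(* [chord_cubic] vanishes at (c, s) when both (c, s) and its rotation by -60
   degrees are chords; the unknown side length drops out. *)
Definition chord_cubic (a x y c s : R) : R :=
  ell_b a x y c s * ell_q a (rotx (1/2) (-h3) c s) (roty (1/2) (-h3) c s)
  - ell_b a x y (rotx (1/2) (-h3) c s) (roty (1/2) (-h3) c s) * ell_q a c s.

Lemma chord_cubic_root a x y c s : chord a x y c s ->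
  chord a x y (rotx (1/2) (-h3) c s) (roty (1/2) (-h3) c s) ->
  chord_cubic a x y c s = 0.
Proof.
  unfold chord, chord_cubic; intros h1 h2.
  replace (ell_q a c s) with (-2 * ell_b a x y c s) by lra.
  replace (ell_q a (rotx (1/2) (-h3) c s) (roty (1/2) (-h3) c s))
    with (-2 * ell_b a x y (rotx (1/2) (-h3) c s) (roty (1/2) (-h3) c s)) by lra.
  ring.
Qed.

Definition chord_coef0 (a x y : R) : R :=
  3/4 * x * a ^ 2 - 1/4 * x + 1/2 * y * sqrt 3 * a ^ 2.
Definition chord_coef1 (a x y : R) : R :=
  -1/2 * x * sqrt 3 * a ^ 2 + 3/4 * y * a ^ 4 - 1/4 * y * a ^ 2.
Definition chord_coef2 (a x y : R) : R :=
  -1/4 * x * a ^ 2 + 3/4 * x + 1/2 * y * sqrt 3 * a ^ 2.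
Definition chord_coef3 (a x y : R) : R :=
  -1/2 * x * sqrt 3 * a ^ 2 - 1/4 * y * a ^ 4 + 3/4 * y * a ^ 2.

Lemma chord_cubic_form a x y c s : chord_cubic a x y c s =
  cubic_form (chord_coef0 a x y) (chord_coef1 a x y) (chord_coef2 a x y) (chord_coef3 a x y) c s.
Proof.
  unfold chord_cubic, cubic_form, ell_b, ell_q, rotx, roty,
    chord_coef0, chord_coef1, chord_coef2, chord_coef3.
  field [sqrt3_sqr].
Qed.

Definition disc_k1 (t : R) : R :=
  -1029/64 * t ^ 4 + 245/16 * t ^ 3 - 63/32 * t ^ 2 - 27/16 * t + 27/64.
Definition disc_k2 (t : R) : R :=
  - (t ^ 2 * (117 * t ^ 4 + 588 * t ^ 3 - 1154 * t ^ 2 + 588 * t + 117)) / 32.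
Definition disc_k3 (t : R) : R :=
  t ^ 4 * (27 * t ^ 4 - 108 * t ^ 3 - 126 * t ^ 2 + 980 * t - 1029) / 64.

Lemma chord_disc_eq a x y :
  cubic_disc (chord_coef0 a x y) (chord_coef1 a x y) (chord_coef2 a x y) (chord_coef3 a x y)
  = disc_k1 (a ^ 2) * x ^ 4 + disc_k2 (a ^ 2) * x ^ 2 * y ^ 2 + disc_k3 (a ^ 2) * y ^ 4.
Proof.
  unfold cubic_disc, chord_coef0, chord_coef1, chord_coef2, chord_coef3,
    disc_k1, disc_k2, disc_k3.
  field [sqrt3_sqr].
Qed.

Lemma disc_k1_neg t : 1 < t -> t <= 2 -> disc_k1 t < 0.
Proof.
  intros h1 h2. unfold disc_k1.
  assert (1 <= t ^ 3) by (replace (t ^ 3) with (t * t * t) by ring; nra).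
  assert (t ^ 3 * (980 - 1029 * t) <= 0) by nra.
  nra.
Qed.

Lemma disc_k2_nonpos t : 1 < t -> disc_k2 t <= 0.
Proof.
  intros h. unfold disc_k2.
  assert (t <= t ^ 2) by nra.
  assert (t ^ 2 <= t ^ 3) by (replace (t ^ 3) with (t ^ 2 * t) by ring; nra).
  assert (0 < 117 * t ^ 3 + 705 * t ^ 2 - 449 * t + 139) by nra.
  assert (117 * t ^ 4 + 588 * t ^ 3 - 1154 * t ^ 2 + 588 * t + 117
          = 256 + (t - 1) * (117 * t ^ 3 + 705 * t ^ 2 - 449 * t + 139)) by ring.
  assert (0 < t ^ 2) by nra.
  nra.
Qed.

Lemma disc_k3_neg t : 1 < t -> t <= 2 -> disc_k3 t < 0.
Proof.
  intros h1 h2. unfold disc_k3.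
  assert (t ^ 2 <= 4) by nra.
  assert (0 <= (2 - t) * (234 - 27 * t ^ 2)) by (apply Rmult_le_pos; lra).
  assert (44 <= 27 * t ^ 3 - 54 * t ^ 2 - 234 * t + 512).
  { replace (27 * t ^ 3 - 54 * t ^ 2 - 234 * t + 512)
      with (44 + (2 - t) * (234 - 27 * t ^ 2)) by ring. lra. }
  assert (0 <= (2 - t) * (27 * t ^ 3 - 54 * t ^ 2 - 234 * t + 512))
    by (apply Rmult_le_pos; lra).
  assert (27 * t ^ 4 - 108 * t ^ 3 - 126 * t ^ 2 + 980 * t - 1029 < 0).
  { replace (27 * t ^ 4 - 108 * t ^ 3 - 126 * t ^ 2 + 980 * t - 1029)
      with (-5 - (2 - t) * (27 * t ^ 3 - 54 * t ^ 2 - 234 * t + 512)) by ring. lra. }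
  assert (0 < t ^ 4) by (apply pow_lt; lra).
  nra.
Qed.

Lemma chord_disc_neg a x y : 1 < a -> a <= sqrt 2 -> onY a (x, y) ->
  cubic_disc (chord_coef0 a x y) (chord_coef1 a x y) (chord_coef2 a x y) (chord_coef3 a x y) < 0.
Proof.
  unfold onY; cbn [fst snd]; intros h1 h2 hY. rewrite chord_disc_eq.
  assert (ht1 : 1 < a ^ 2) by nra.
  assert (ht2 : a ^ 2 <= 2) by (rewrite <- (pow2_sqrt 2) by lra; apply pow_incr; lra).
  pose proof (disc_k1_neg _ ht1 ht2). pose proof (disc_k2_nonpos _ ht1).
  pose proof (disc_k3_neg _ ht1 ht2).
  set (X := x ^ 2). set (Y := y ^ 2).
  replace (x ^ 4) with (X * X) by (unfold X; ring).
  replace (y ^ 4) with (Y * Y) by (unfold Y; ring).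
  assert (0 <= X) by apply pow2_ge_0. assert (0 <= Y) by apply pow2_ge_0.
  assert (0 < X + Y).
  { destruct (Req_dec x 0) as [->|hx]; [|pose proof (Rsqr_pos_lt x hx); unfold X, Rsqr in *; nra].
    unfold Rdiv in hY. rewrite Rmult_0_l in hY. unfold Y; lra. }
  set (k1 := disc_k1 (a ^ 2)) in *. set (k2 := disc_k2 (a ^ 2)) in *.
  set (k3 := disc_k3 (a ^ 2)) in *.
  assert (k2 * X * Y <= 0) by (rewrite Rmult_assoc; assert (0 <= X * Y) by nra; nra).
  destruct (Rle_lt_dec X 0).
  - assert (X = 0) by lra. assert (0 < Y * Y) by nra. nra.
  - assert (0 < X * X) by nra. assert (0 <= Y * Y) by nra. nra.
Qed.

Lemma rotm60_rot60 c s :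
  rotx (1/2) (-h3) (rotx (1/2) h3 c s) (roty (1/2) h3 c s) = c /\
  roty (1/2) (-h3) (rotx (1/2) h3 c s) (roty (1/2) h3 c s) = s.
Proof. unfold rotx, roty; split; field [sqrt3_sqr]. Qed.

Lemma side_of_rot60 a x y r : side_of a (x, y) r ->
  0 < r /\ exists qx qy wx wy, onY a (qx, qy) /\ onY a (wx, wy) /\
    (qx - x) ^ 2 + (qy - y) ^ 2 = r ^ 2 /\
    wx - x = rotx (1/2) h3 (qx - x) (qy - y) /\ wy - y = roty (1/2) h3 (qx - x) (qy - y).
Proof.
  intros [[qx qy] [[wx wy] [hq [hw [hr [d1 [d2 d3]]]]]]].
  split; auto.
  apply dist_sqr in d1, d2, d3. cbn [fst snd] in d1, d2, d3.
  assert (n1 : (qx - x) ^ 2 + (qy - y) ^ 2 = r ^ 2) by (rewrite <- d1; ring).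
  assert (n2 : (wx - x) ^ 2 + (wy - y) ^ 2 = r ^ 2) by (rewrite <- d3; ring).
  assert (n12 : (qx - x - (wx - x)) ^ 2 + (qy - y - (wy - y)) ^ 2 = r ^ 2)
    by (rewrite <- d2; ring).
  destruct (rot60_of_equilateral _ _ _ _ r hr n1 n2 n12) as [[e1 e2]|[e1 e2]].
  - exists qx, qy, wx, wy. auto.
  - exists wx, wy, qx, qy. auto.
Qed.

Lemma side_of_chords a x y r : a <> 0 -> onY a (x, y) -> side_of a (x, y) r ->
  0 < r /\ exists c s, c ^ 2 + s ^ 2 = r ^ 2 /\ chord a x y c s /\
    chord a x y (rotx (1/2) (-h3) c s) (roty (1/2) (-h3) c s).
Proof.
  intros ha hp h.
  destruct (side_of_rot60 a x y r h) as [hr [qx [qy [wx [wy [hq [hw [n [e1 e2]]]]]]]]].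
  split; auto. exists (wx - x), (wy - y).
  rewrite e1, e2. destruct (rotm60_rot60 (qx - x) (qy - y)) as [-> ->].
  rewrite rot60_norm, <- e1, <- e2.
  split; [exact n|split]; apply onY_translate; auto;
    [replace (x + (wx - x), y + (wy - y)) with (wx, wy) by (f_equal; ring)
    |replace (x + (qx - x), y + (qy - y)) with (qx, qy) by (f_equal; ring)]; auto.
Qed.

Lemma parallel_chords_eq a x y c1 s1 c2 s2 : 1 < a ->
  0 < c1 ^ 2 + s1 ^ 2 -> 0 < c2 ^ 2 + s2 ^ 2 -> c1 * s2 - s1 * c2 = 0 ->
  chord a x y c1 s1 -> chord a x y c2 s2 -> c1 = c2 /\ s1 = s2.
Proof.
  unfold chord; intros ha n1 n2 hdet h1 h2.
  set (l := (c1 * c2 + s1 * s2) / (c1 ^ 2 + s1 ^ 2)).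
  assert (hv : c2 = l * c1 /\ s2 = l * s1).
  { destruct (rot_of_dot_cross l 0 c1 s1 c2 s2) as [ec es]; auto;
      [unfold l; field; lra | rewrite hdet; ring | unfold rotx, roty in *; split; lra]. }
  clearbody l. destruct hv as [-> ->].
  assert (hl : l <> 0) by (intro; subst; lra).
  assert (Q : 0 < ell_q a c1 s1) by (apply ell_q_pos; lra).
  assert (E : l * (l - 1) * ell_q a c1 s1 = 0).
  { replace (l * (l - 1) * ell_q a c1 s1)
      with (ell_q a (l * c1) (l * s1) + 2 * ell_b a x y (l * c1) (l * s1)
            - l * (ell_q a c1 s1 + 2 * ell_b a x y c1 s1)) by (unfold ell_q, ell_b; ring).
    rewrite h1, h2; ring. }
  assert (l = 1) by (destruct (Rmult_integral _ _ E) as [E'|]; [|lra];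
                     destruct (Rmult_integral _ _ E'); [contradiction|lra]).
  subst l; split; ring.
Qed.

Lemma side_of_unique a p r r' : 1 < a -> a <= sqrt 2 -> onY a p ->
  side_of a p r -> side_of a p r' -> r = r'.
Proof.
  intros ha1 ha2 hp h h'. destruct p as [x y].
  assert (ha : a <> 0) by lra.
  destruct (side_of_chords a x y r ha hp h) as [hr [c1 [s1 [n1 [q1 q1']]]]].
  destruct (side_of_chords a x y r' ha hp h') as [hr' [c2 [s2 [n2 [q2 q2']]]]].
  destruct (Req_dec (c1 * s2 - s1 * c2) 0) as [hd|hd].
  - destruct (parallel_chords_eq a x y c1 s1 c2 s2) as [-> ->]; auto; try nra.
  - exfalso.
    pose proof (chord_cubic_root _ _ _ _ _ q1 q1') as H1.
    pose proof (chord_cubic_root _ _ _ _ _ q2 q2') as H2.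
    rewrite chord_cubic_form in H1, H2.
    pose proof (cubic_disc_nonneg_of_roots _ _ _ _ _ _ _ _ H1 H2 hd).
    pose proof (chord_disc_neg a x y ha1 ha2 hp). lra.
Qed.

Lemma side_of_of_chords a x y c s r : a <> 0 -> onY a (x, y) -> 0 < r ->
  c ^ 2 + s ^ 2 = r ^ 2 -> chord a x y c s ->
  chord a x y (rotx (1/2) (-h3) c s) (roty (1/2) (-h3) c s) -> side_of a (x, y) r.
Proof.
  intros ha hp hr n h1 h2.
  exists (x + rotx (1/2) (-h3) c s, y + roty (1/2) (-h3) c s), (x + c, y + s).
  repeat split; try (apply onY_translate; auto); auto; apply dist_of_sqr; try lra;
    cbn [fst snd]; rewrite <- n; unfold rotx, roty; field [sqrt3_sqr].
Qed.

Lemma chord_scale a x y c s rho :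
  rho * ell_q a c s + 2 * ell_b a x y c s = 0 -> chord a x y (rho * c) (rho * s).
Proof.
  unfold chord, ell_q, ell_b; intro h.
  transitivity (rho * (rho * (c ^ 2 + a ^ 2 * s ^ 2) + 2 * (x * c + a ^ 2 * y * s)));
    [ring | rewrite h; ring].
Qed.

Lemma chord_cubic_unit_root a x y :
  exists c s, c ^ 2 + s ^ 2 = 1 /\ chord_cubic a x y c s = 0.
Proof.
  set (f := fun t => chord_cubic a x y (cos t) (sin t)).
  assert (cf : continuity f) by (unfold f, chord_cubic, ell_b, ell_q, rotx, roty; reg).
  (* A cubic form is odd, so f changes sign between 0 and PI. *)
  assert (f0 : f 0 * f PI <= 0).
  { unfold f. rewrite cos_0, sin_0, cos_PI, sin_PI, !chord_cubic_form.
    replace (cubic_form (chord_coef0 a x y) (chord_coef1 a x y) (chord_coef2 a x y)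
               (chord_coef3 a x y) (-1) 0)
      with (- cubic_form (chord_coef0 a x y) (chord_coef1 a x y) (chord_coef2 a x y)
               (chord_coef3 a x y) 1 0) by (unfold cubic_form; ring).
    set (z := cubic_form _ _ _ _ 1 0). nra. }
  destruct (IVT_cor f 0 PI cf (Rlt_le _ _ PI_RGT_0) f0) as [t [_ ht]].
  exists (cos t), (sin t). split; auto.
  rewrite Rplus_comm, <- !Rsqr_pow2. apply sin2_cos2.
Qed.

Lemma ell_b_rot_zero a x y c s : a <> 0 -> c ^ 2 + s ^ 2 = 1 ->
  ell_b a x y c s = 0 -> ell_b a x y (rotx (1/2) (-h3) c s) (roty (1/2) (-h3) c s) = 0 ->
  x = 0 /\ y = 0.
Proof.
  unfold ell_b; intros ha u e1 e2.
  (* The two linear forms in (x, a^2 y) have determinant -sqrt 3 / 2 (c^2 + s^2). *)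
  assert (ex : x * h3 * (c ^ 2 + s ^ 2)
               = - roty (1/2) (-h3) c s * (x * c + a ^ 2 * y * s)
                 + s * (x * rotx (1/2) (-h3) c s + a ^ 2 * y * roty (1/2) (-h3) c s))
    by (unfold rotx, roty; field).
  assert (ey : a ^ 2 * y * h3 * (c ^ 2 + s ^ 2)
               = rotx (1/2) (-h3) c s * (x * c + a ^ 2 * y * s)
                 - c * (x * rotx (1/2) (-h3) c s + a ^ 2 * y * roty (1/2) (-h3) c s))
    by (unfold rotx, roty; field).
  rewrite e1, e2, u in ex, ey.
  pose proof sqrt3_pos. assert (a ^ 2 <> 0) by (apply pow_nonzero; auto).
  split; [nra|]. apply (Rmult_eq_reg_l (a ^ 2 * h3)); [lra|].
  intro e; apply Rmult_integral in e as [|]; lra.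
Qed.

Lemma side_of_exists a x y : 1 < a -> onY a (x, y) -> exists r, side_of a (x, y) r.
Proof.
  intros ha hp. assert (ha0 : a <> 0) by lra.
  destruct (chord_cubic_unit_root a x y) as [c [s [u hc]]].
  set (c' := rotx (1/2) (-h3) c s). set (s' := roty (1/2) (-h3) c s).
  assert (Q : 0 < ell_q a c s) by (apply ell_q_pos; lra).
  assert (Q' : 0 < ell_q a c' s').
  { apply ell_q_pos; auto. unfold c', s'. rewrite rot_norm, u. field_simplify [sqrt3_sqr]; lra. }
  assert (hN : ell_b a x y c s <> 0).
  { intro e. assert (e' : ell_b a x y c' s' = 0).
    { unfold chord_cubic in hc. fold c' s' in hc. rewrite e in hc.
      apply (Rmult_eq_reg_r (ell_q a c s)); lra. }
    destruct (ell_b_rot_zero a x y c s ha0 u e e') as [-> ->].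
    unfold onY in hp; cbn [fst snd] in hp. unfold Rdiv in hp. lra. }
  set (rho := -2 * ell_b a x y c s / ell_q a c s).
  assert (hQ : rho * ell_q a c s = -2 * ell_b a x y c s) by (unfold rho; field; lra).
  assert (hrho : rho <> 0) by (intro e; rewrite e in hQ; lra).
  exists (Rabs rho).
  apply side_of_of_chords with (c := rho * c) (s := rho * s); auto.
  - apply Rabs_pos_lt; auto.
  - rewrite pow2_abs. transitivity (rho ^ 2 * (c ^ 2 + s ^ 2)); [ring | rewrite u; ring].
  - apply chord_scale. lra.
  - replace (rotx (1/2) (-h3) (rho * c) (rho * s)) with (rho * c') by (unfold c', rotx; ring).
    replace (roty (1/2) (-h3) (rho * c) (rho * s)) with (rho * s') by (unfold s', roty; ring).
    apply chord_scale. apply (Rmult_eq_reg_r (ell_q a c s)); [|lra].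
    transitivity (-2 * chord_cubic a x y c s); [|rewrite hc; ring].
    unfold chord_cubic, rho; fold c' s'. field. lra.
Qed.

Lemma s_of_side_of a p r : 1 < a -> a <= sqrt 2 -> onY a p -> side_of a p r ->
  Defs.s a p = r.
Proof.
  intros ha1 ha2 hp h. apply (side_of_unique a p); auto.
  unfold Defs.s. apply epsilon_spec. eauto.
Qed.

Definition cube_re (c s : R) : R := c ^ 3 - 3 * c * s ^ 2.
Definition cube_im (c s : R) : R := 3 * c ^ 2 * s - s ^ 3.

Lemma cube_norm c s : cube_re c s ^ 2 + cube_im c s ^ 2 = (c ^ 2 + s ^ 2) ^ 3.
Proof. unfold cube_re, cube_im; ring. Qed.

Lemma cube_re_rot k l c s : cube_re (rotx k l c s) (roty k l c s)
  = cube_re k l * cube_re c s - cube_im k l * cube_im c s.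
Proof. unfold cube_re, cube_im, rotx, roty; ring. Qed.

Lemma cube_im_rot k l c s : cube_im (rotx k l c s) (roty k l c s)
  = cube_im k l * cube_re c s + cube_re k l * cube_im c s.
Proof. unfold cube_re, cube_im, rotx, roty; ring. Qed.

Lemma cube_rot120 c s :
  cube_re (rotx (-1/2) h3 c s) (roty (-1/2) h3 c s) = cube_re c s /\
  cube_im (rotx (-1/2) h3 c s) (roty (-1/2) h3 c s) = cube_im c s.
Proof.
  rewrite cube_re_rot, cube_im_rot.
  replace (cube_re (-1/2) h3) with 1 by (unfold cube_re; field [sqrt3_sqr]).
  replace (cube_im (-1/2) h3) with 0 by (unfold cube_im; field [sqrt3_sqr]).
  split; ring.
Qed.

Lemma rot120_norm c s :
  rotx (-1/2) h3 c s ^ 2 + roty (-1/2) h3 c s ^ 2 = c ^ 2 + s ^ 2.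
Proof. rewrite rot_norm. field [sqrt3_sqr]. Qed.

Lemma rot120_rot240 c s :
  rotx (-1/2) h3 (rotx (-1/2) h3 (rotx (-1/2) h3 c s) (roty (-1/2) h3 c s))
    (roty (-1/2) h3 (rotx (-1/2) h3 c s) (roty (-1/2) h3 c s)) = c /\
  roty (-1/2) h3 (rotx (-1/2) h3 (rotx (-1/2) h3 c s) (roty (-1/2) h3 c s))
    (roty (-1/2) h3 (rotx (-1/2) h3 c s) (roty (-1/2) h3 c s)) = s.
Proof. unfold rotx, roty; split; field [sqrt3_sqr]. Qed.

(* Read in the coordinates (x/a, y), where Y is the unit circle, [vertex a c s] is
   (vertex_cx, vertex_cy) normalised; (c, s) is the direction of the Fourier
   coefficient S of the triangle (see [vertex_of_moments]), and turning it by 120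
   degrees moves to the next vertex. *)
Definition vertex_den (a c s : R) : R :=
  (a ^ 2 - 1) ^ 2 / 4 * (cube_re c s ^ 2 + cube_im c s ^ 2 / a ^ 2) + 2 * (a ^ 2 + 1).
Definition vertex_scale (a c s : R) : R := / sqrt (vertex_den a c s).
Definition vertex_cx (a c s : R) : R := - (a ^ 2 - 1) / 2 * cube_re c s - 2 * c.
Definition vertex_cy (a c s : R) : R := (a ^ 2 - 1) / (2 * a) * cube_im c s + 2 * a * s.
Definition vertex (a c s : R) : pt :=
  (vertex_scale a c s * (a * vertex_cx a c s), vertex_scale a c s * vertex_cy a c s).
Definition side_len (a c s : R) : R := 2 * sqrt 3 * a * vertex_scale a c s.

Lemma vertex_den_pos a c s : 1 < a -> 0 < vertex_den a c s.
Proof.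
  intro ha. unfold vertex_den.
  assert (0 < a ^ 2) by nra.
  assert (0 <= cube_im c s ^ 2 / a ^ 2)
    by (apply Rmult_le_pos; [apply pow2_ge_0 | apply Rlt_le, Rinv_0_lt_compat; auto]).
  assert (0 <= (a ^ 2 - 1) ^ 2 / 4) by (pose proof (pow2_ge_0 (a ^ 2 - 1)); lra).
  assert (0 <= cube_re c s ^ 2) by apply pow2_ge_0.
  assert (0 <= (a ^ 2 - 1) ^ 2 / 4 * (cube_re c s ^ 2 + cube_im c s ^ 2 / a ^ 2))
    by (apply Rmult_le_pos; lra).
  lra.
Qed.

Lemma vertex_scale_pos a c s : 1 < a -> 0 < vertex_scale a c s.
Proof. intro. apply Rinv_0_lt_compat, sqrt_lt_R0, vertex_den_pos; auto. Qed.

Lemma vertex_scale_sqr a c s : 1 < a -> vertex_scale a c s ^ 2 * vertex_den a c s = 1.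
Proof.
  intro ha. unfold vertex_scale. pose proof (vertex_den_pos a c s ha).
  rewrite <- (pow2_sqrt (vertex_den a c s)) at 2 by lra.
  field. apply Rgt_not_eq, sqrt_lt_R0; auto.
Qed.

Lemma vertex_c_norm a c s : 1 < a -> c ^ 2 + s ^ 2 = 1 ->
  vertex_cx a c s ^ 2 + vertex_cy a c s ^ 2 = vertex_den a c s.
Proof.
  intros ha u.
  transitivity (vertex_den a c s + 2 * (a ^ 2 - 1) * (c ^ 2 - s ^ 2) * (c ^ 2 + s ^ 2 - 1)
                + (2 * a ^ 2 + 2) * (c ^ 2 + s ^ 2 - 1)).
  - unfold vertex_cx, vertex_cy, vertex_den, cube_re, cube_im. field. lra.
  - rewrite u. ring.
Qed.

Lemma vertex_onY a c s : 1 < a -> c ^ 2 + s ^ 2 = 1 -> onY a (vertex a c s).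
Proof.
  intros ha u. unfold onY, vertex; cbn [fst snd].
  transitivity (vertex_scale a c s ^ 2 * (vertex_cx a c s ^ 2 + vertex_cy a c s ^ 2));
    [field; lra|].
  rewrite vertex_c_norm; auto. apply vertex_scale_sqr; auto.
Qed.

Lemma vertex_scale_rot120 a c s :
  vertex_scale a (rotx (-1/2) h3 c s) (roty (-1/2) h3 c s) = vertex_scale a c s.
Proof. unfold vertex_scale, vertex_den. destruct (cube_rot120 c s) as [-> ->]. reflexivity. Qed.

Lemma side_len_rot120 a c s :
  side_len a (rotx (-1/2) h3 c s) (roty (-1/2) h3 c s) = side_len a c s.
Proof. unfold side_len. rewrite vertex_scale_rot120. reflexivity. Qed.

Lemma side_len_pos a c s : 1 < a -> 0 < side_len a c s.
Proof.
  intro ha. pose proof (vertex_scale_pos a c s ha). pose proof sqrt3_pos.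
  unfold side_len. repeat apply Rmult_lt_0_compat; lra.
Qed.

Lemma vertex_dist_rot120 a c s : 1 < a -> c ^ 2 + s ^ 2 = 1 ->
  Defs.dist (vertex a c s) (vertex a (rotx (-1/2) h3 c s) (roty (-1/2) h3 c s)) = side_len a c s.
Proof.
  intros ha u. apply dist_of_sqr; [apply Rlt_le, side_len_pos; auto|].
  unfold vertex, vertex_cx, vertex_cy; cbn [fst snd].
  rewrite vertex_scale_rot120. destruct (cube_rot120 c s) as [-> ->].
  unfold side_len.
  transitivity (vertex_scale a c s ^ 2 * (4 * a ^ 2)
                * ((c - rotx (-1/2) h3 c s) ^ 2 + (s - roty (-1/2) h3 c s) ^ 2));
    [field; lra|].
  replace ((c - rotx (-1/2) h3 c s) ^ 2 + (s - roty (-1/2) h3 c s) ^ 2)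
    with (3 * (c ^ 2 + s ^ 2)) by (unfold rotx, roty; field [sqrt3_sqr]).
  rewrite u. field [sqrt3_sqr].
Qed.

Lemma vertex_side_of a c s : 1 < a -> c ^ 2 + s ^ 2 = 1 ->
  side_of a (vertex a c s) (side_len a c s).
Proof.
  intros ha u.
  set (c' := rotx (-1/2) h3 c s). set (s' := roty (-1/2) h3 c s).
  set (c'' := rotx (-1/2) h3 c' s'). set (s'' := roty (-1/2) h3 c' s').
  assert (u' : c' ^ 2 + s' ^ 2 = 1) by (unfold c', s'; rewrite rot120_norm; auto).
  assert (u'' : c'' ^ 2 + s'' ^ 2 = 1) by (unfold c'', s''; rewrite rot120_norm; auto).
  assert (e' : side_len a c' s' = side_len a c s) by apply side_len_rot120.
  assert (e'' : side_len a c'' s'' = side_len a c s)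
    by (unfold c'', s''; rewrite side_len_rot120; apply side_len_rot120).
  exists (vertex a c' s'), (vertex a c'' s'').
  repeat split; try apply vertex_onY; auto; try apply side_len_pos; auto.
  - apply vertex_dist_rot120; auto.
  - rewrite <- e'. apply vertex_dist_rot120; auto.
  - rewrite <- e''. destruct (rot120_rot240 c s) as [E1 E2].
    fold c' s' in E1, E2. fold c'' s'' in E1, E2.
    rewrite <- E1 at 1. rewrite <- E2 at 1. apply vertex_dist_rot120; auto.
Qed.

Lemma s_vertex a c s : 1 < a -> a <= sqrt 2 -> c ^ 2 + s ^ 2 = 1 ->
  Defs.s a (vertex a c s) = side_len a c s.
Proof.
  intros. apply s_of_side_of; auto using vertex_onY, vertex_side_of.
Qed.

(* Discrete Fourier coefficients sum_j w^j z_j of three points z_j, where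
   (u, v) is a cube root w of unity viewed as a rotation. *)
Definition dft_x (u v p0 y0 p1 y1 p2 y2 : R) : R := p0 + rotx u v p1 y1 + rotx u (-v) p2 y2.
Definition dft_y (u v p0 y0 p1 y1 p2 y2 : R) : R := y0 + roty u v p1 y1 + roty u (-v) p2 y2.

Definition synth_x (Mx Sx Sy Tx Ty u v : R) : R := Mx + rotx u (-v) Sx Sy + rotx u v Tx Ty.
Definition synth_y (My Sx Sy Tx Ty u v : R) : R := My + roty u (-v) Sx Sy + roty u v Tx Ty.

Lemma dft_inverse p0 y0 p1 y1 p2 y2 :
  let Mx := dft_x 1 0 p0 y0 p1 y1 p2 y2 in let My := dft_y 1 0 p0 y0 p1 y1 p2 y2 in
  let Sx := dft_x (-1/2) h3 p0 y0 p1 y1 p2 y2 in let Sy := dft_y (-1/2) h3 p0 y0 p1 y1 p2 y2 in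
  let Tx := dft_x (-1/2) (-h3) p0 y0 p1 y1 p2 y2 in
  let Ty := dft_y (-1/2) (-h3) p0 y0 p1 y1 p2 y2 in
  synth_x Mx Sx Sy Tx Ty 1 0 = 3 * p0 /\ synth_y My Sx Sy Tx Ty 1 0 = 3 * y0 /\
  synth_x Mx Sx Sy Tx Ty (-1/2) h3 = 3 * p1 /\ synth_y My Sx Sy Tx Ty (-1/2) h3 = 3 * y1 /\
  synth_x Mx Sx Sy Tx Ty (-1/2) (-h3) = 3 * p2 /\ synth_y My Sx Sy Tx Ty (-1/2) (-h3) = 3 * y2.
Proof. unfold synth_x, synth_y, dft_x, dft_y, rotx, roty; repeat split; field [sqrt3_sqr]. Qed.

Definition cube_root_unity (u v : R) : Prop :=
  (u = 1 /\ v = 0) \/ (u = -1/2 /\ v = h3) \/ (u = -1/2 /\ v = -h3).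

Definition moment_norm (k Mx My Sx Sy : R) : R :=
  Mx ^ 2 + My ^ 2 + (1 + k ^ 2) * (Sx ^ 2 + Sy ^ 2).
Definition moment_re (k Mx My Sx Sy : R) : R :=
  (1 - k) * Mx * Sx + (1 + k) * My * Sy - k * (Sx ^ 2 - Sy ^ 2).
Definition moment_im (k Mx My Sx Sy : R) : R :=
  (1 - k) * Mx * Sy - (1 + k) * My * Sx + 2 * k * Sx * Sy.

Lemma synth_norm k Mx My Sx Sy u v : cube_root_unity u v ->
  synth_x Mx Sx Sy (- k * Sx) (k * Sy) u v ^ 2 + synth_y My Sx Sy (- k * Sx) (k * Sy) u v ^ 2
  = moment_norm k Mx My Sx Sy
    + 2 * (u * moment_re k Mx My Sx Sy + v * moment_im k Mx My Sx Sy).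
Proof.
  unfold synth_x, synth_y, moment_norm, moment_re, moment_im, rotx, roty.
  intros [[-> ->]|[[-> ->]|[-> ->]]]; field [sqrt3_sqr].
Qed.

Lemma moments_of_synth_norms k Mx My Sx Sy :
  (forall u v, cube_root_unity u v ->
     synth_x Mx Sx Sy (- k * Sx) (k * Sy) u v ^ 2
     + synth_y My Sx Sy (- k * Sx) (k * Sy) u v ^ 2 = 9) ->
  moment_norm k Mx My Sx Sy = 9 /\ moment_re k Mx My Sx Sy = 0 /\ moment_im k Mx My Sx Sy = 0.
Proof.
  intro h.
  assert (h0 := h 1 0 ltac:(left; auto)).
  assert (h1 := h (-1/2) h3 ltac:(right; left; auto)).
  assert (h2 := h (-1/2) (-h3) ltac:(right; right; auto)).
  rewrite synth_norm in h0, h1, h2 by (unfold cube_root_unity; auto).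
  pose proof sqrt3_pos.
  assert (him : moment_im k Mx My Sx Sy * sqrt 3 = 0) by lra.
  repeat split; try lra.
  apply Rmult_integral in him as [|]; lra.
Qed.

Lemma moment_centre k Mx My sg c s : 0 < sg -> c ^ 2 + s ^ 2 = 1 ->
  moment_re k Mx My (sg * c) (sg * s) = 0 -> moment_im k Mx My (sg * c) (sg * s) = 0 ->
  (1 - k) * Mx = k * sg * cube_re c s /\ (1 + k) * My = k * sg * cube_im c s.
Proof.
  intros hsg u hre him.
  set (B1 := (1 - k) * Mx * c + (1 + k) * My * s - k * sg * (c ^ 2 - s ^ 2)).
  set (B2 := (1 - k) * Mx * s - (1 + k) * My * c + 2 * k * sg * c * s).
  assert (b1 : B1 = 0).
  { replace (moment_re k Mx My (sg * c) (sg * s)) with (sg * B1) in hre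
      by (unfold moment_re, B1; ring).
    apply Rmult_integral in hre as [|]; lra. }
  assert (b2 : B2 = 0).
  { replace (moment_im k Mx My (sg * c) (sg * s)) with (sg * B2) in him
      by (unfold moment_im, B2; ring).
    apply Rmult_integral in him as [|]; lra. }
  split.
  - transitivity ((1 - k) * Mx * (c ^ 2 + s ^ 2)); [rewrite u; ring|].
    transitivity (k * sg * cube_re c s + c * B1 + s * B2);
      [unfold B1, B2, cube_re; ring | rewrite b1, b2; ring].
  - transitivity ((1 + k) * My * (c ^ 2 + s ^ 2)); [rewrite u; ring|].
    transitivity (k * sg * cube_im c s + s * B1 - c * B2);
      [unfold B1, B2, cube_im; ring | rewrite b1, b2; ring].
Qed.

Lemma vertex_of_moments a Mx My sg c s : 1 < a -> 0 < sg -> c ^ 2 + s ^ 2 = 1 ->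
  let k := (a + 1) / (a - 1) in
  (forall u v, cube_root_unity u v ->
     synth_x Mx (sg * c) (sg * s) (- k * (sg * c)) (k * (sg * s)) u v ^ 2
     + synth_y My (sg * c) (sg * s) (- k * (sg * c)) (k * (sg * s)) u v ^ 2 = 9) ->
  vertex a c s =
    (a * (synth_x Mx (sg * c) (sg * s) (- k * (sg * c)) (k * (sg * s)) 1 0 / 3),
     synth_y My (sg * c) (sg * s) (- k * (sg * c)) (k * (sg * s)) 1 0 / 3).
Proof.
  intros ha hsg u k h.
  assert (am1 : a - 1 <> 0) by lra. assert (a0 : a <> 0) by lra.
  destruct (moments_of_synth_norms _ _ _ _ _ h) as [hK [hre him]].
  destruct (moment_centre k Mx My sg c s hsg u hre him) as [hMx hMy].
  assert (eMx : Mx = - (a + 1) / 2 * sg * cube_re c s).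
  { assert (E : 1 - k = - (2 / (a - 1))) by (unfold k; field; auto).
    assert (0 < 2 / (a - 1)) by (apply Rdiv_lt_0_compat; lra).
    apply (Rmult_eq_reg_l (1 - k)); [|lra].
    rewrite hMx. unfold k. field. auto. }
  assert (eMy : My = (a + 1) / (2 * a) * sg * cube_im c s).
  { assert (0 < k) by (apply Rdiv_lt_0_compat; lra).
    apply (Rmult_eq_reg_l (1 + k)); [|lra].
    rewrite hMy. unfold k. field. auto. }
  set (k0 := sg / (3 * (a - 1))).
  assert (hk0 : 0 < k0) by (unfold k0; apply Rdiv_lt_0_compat; lra).
  assert (hD : k0 ^ 2 * vertex_den a c s = 1).
  { transitivity (moment_norm k Mx My (sg * c) (sg * s) / 9); [|rewrite hK; field].
    unfold moment_norm, k0, vertex_den. rewrite eMx, eMy. unfold k.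
    replace ((sg * c) ^ 2 + (sg * s) ^ 2) with (sg ^ 2 * (c ^ 2 + s ^ 2)) by ring.
    rewrite u. field. auto. }
  assert (ek : k0 = vertex_scale a c s).
  { pose proof (vertex_scale_sqr a c s ha). pose proof (vertex_scale_pos a c s ha).
    pose proof (vertex_den_pos a c s ha).
    assert (k0 ^ 2 = vertex_scale a c s ^ 2) by (apply (Rmult_eq_reg_r (vertex_den a c s)); lra).
    nra. }
  unfold vertex, vertex_cx, vertex_cy, synth_x, synth_y, rotx, roty.
  rewrite <- ek, eMx, eMy. unfold k0, k. f_equal; field; auto.
Qed.

(* For points (a p_j, y_j) with z_j = (p_j, y_j), the Fourier coefficient
   S' = z_0 + w z_1 + w^2 z_2 of the physical triangle is ((a+1) S + (a-1) conj T) / 2,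
   and it vanishes for a positively oriented equilateral triangle. *)
Lemma dft_of_equilateral a p0 y0 p1 y1 p2 y2 : 1 < a ->
  a * p2 - a * p0 = rotx (1/2) h3 (a * p1 - a * p0) (y1 - y0) ->
  y2 - y0 = roty (1/2) h3 (a * p1 - a * p0) (y1 - y0) ->
  dft_x (-1/2) (-h3) p0 y0 p1 y1 p2 y2
    = - ((a + 1) / (a - 1)) * dft_x (-1/2) h3 p0 y0 p1 y1 p2 y2 /\
  dft_y (-1/2) (-h3) p0 y0 p1 y1 p2 y2
    = (a + 1) / (a - 1) * dft_y (-1/2) h3 p0 y0 p1 y1 p2 y2.
Proof.
  intros ha o1 o2. assert (am1 : a - 1 <> 0) by lra.
  set (Sx := dft_x (-1/2) h3 p0 y0 p1 y1 p2 y2). set (Sy := dft_y (-1/2) h3 p0 y0 p1 y1 p2 y2).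
  set (Tx := dft_x (-1/2) (-h3) p0 y0 p1 y1 p2 y2).
  set (Ty := dft_y (-1/2) (-h3) p0 y0 p1 y1 p2 y2).
  assert (L1 : (a + 1) / 2 * Sx + (a - 1) / 2 * Tx = 0).
  { transitivity (-1/2 * (a * p2 - a * p0 - rotx (1/2) h3 (a * p1 - a * p0) (y1 - y0))
                  + h3 * (y2 - y0 - roty (1/2) h3 (a * p1 - a * p0) (y1 - y0))).
    - unfold Sx, Tx, dft_x, rotx, roty. field [sqrt3_sqr].
    - rewrite <- o1, <- o2. ring. }
  assert (L2 : (a + 1) / 2 * Sy - (a - 1) / 2 * Ty = 0).
  { transitivity (- h3 * (a * p2 - a * p0 - rotx (1/2) h3 (a * p1 - a * p0) (y1 - y0))
                  - 1/2 * (y2 - y0 - roty (1/2) h3 (a * p1 - a * p0) (y1 - y0))).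
    - unfold Sy, Ty, dft_y, rotx, roty. field [sqrt3_sqr].
    - rewrite <- o1, <- o2. ring. }
  split; apply (Rmult_eq_reg_l ((a - 1) / 2)); try (intro e; lra);
    [transitivity (- ((a + 1) / 2 * Sx)) | transitivity ((a + 1) / 2 * Sy)];
    try lra; field; auto.
Qed.

Lemma vertex_of_triangle a x0 y0 x1 y1 x2 y2 : 1 < a ->
  onY a (x0, y0) -> onY a (x1, y1) -> onY a (x2, y2) ->
  x2 - x0 = rotx (1/2) h3 (x1 - x0) (y1 - y0) -> y2 - y0 = roty (1/2) h3 (x1 - x0) (y1 - y0) ->
  (x1, y1) <> (x0, y0) ->
  exists c s, c ^ 2 + s ^ 2 = 1 /\ vertex a c s = (x0, y0).
Proof.
  intros ha h0 h1 h2 o1 o2 hne.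
  unfold onY in h0, h1, h2; cbn [fst snd] in h0, h1, h2.
  assert (a0 : a <> 0) by lra.
  set (p0 := x0 / a) in *. set (p1 := x1 / a) in *. set (p2 := x2 / a) in *.
  replace x0 with (a * p0) in * by (unfold p0; field; auto).
  replace x1 with (a * p1) in * by (unfold p1; field; auto).
  replace x2 with (a * p2) in * by (unfold p2; field; auto).
  clearbody p0 p1 p2.
  destruct (dft_of_equilateral a p0 y0 p1 y1 p2 y2 ha o1 o2) as [hTx hTy].
  pose proof (dft_inverse p0 y0 p1 y1 p2 y2) as I. cbv zeta in I.
  rewrite hTx, hTy in I.
  set (Mx := dft_x 1 0 p0 y0 p1 y1 p2 y2) in I. set (My := dft_y 1 0 p0 y0 p1 y1 p2 y2) in I.
  set (Sx := dft_x (-1/2) h3 p0 y0 p1 y1 p2 y2) in I.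
  set (Sy := dft_y (-1/2) h3 p0 y0 p1 y1 p2 y2) in I.
  set (k := (a + 1) / (a - 1)) in I. clearbody Mx My Sx Sy.
  assert (hS : 0 < Sx ^ 2 + Sy ^ 2).
  { destruct (Req_dec (Sx ^ 2 + Sy ^ 2) 0) as [e|e];
      [|pose proof (pow2_ge_0 Sx); pose proof (pow2_ge_0 Sy); lra].
    assert (Sx = 0) by nra. assert (Sy = 0) by nra. subst Sx Sy.
    destruct I as [i0x [i0y [i1x [i1y _]]]]. unfold synth_x, synth_y, rotx, roty in *.
    exfalso; apply hne. f_equal; [f_equal|]; lra. }
  set (sg := sqrt (Sx ^ 2 + Sy ^ 2)).
  assert (hsg : 0 < sg) by (apply sqrt_lt_R0; auto).
  assert (hsg2 : sg ^ 2 = Sx ^ 2 + Sy ^ 2) by (apply pow2_sqrt; lra).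
  assert (hu : (Sx / sg) ^ 2 + (Sy / sg) ^ 2 = 1).
  { transitivity ((Sx ^ 2 + Sy ^ 2) / sg ^ 2); [field; lra | rewrite hsg2; field; lra]. }
  exists (Sx / sg), (Sy / sg). split; [exact hu|].
  replace Sx with (sg * (Sx / sg)) in I by (field; lra).
  replace Sy with (sg * (Sy / sg)) in I by (field; lra).
  destruct I as [i0x [i0y [i1x [i1y [i2x i2y]]]]].
  rewrite (vertex_of_moments a Mx My sg (Sx / sg) (Sy / sg)); auto.
  - fold k. rewrite i0x, i0y. f_equal; field.
  - fold k. intros u v [[-> ->]|[[-> ->]|[-> ->]]].
    + rewrite i0x, i0y. lra.
    + rewrite i1x, i1y. lra.
    + rewrite i2x, i2y. lra.
Qed.

Lemma onY_vertex a p : 1 < a -> onY a p -> exists c s, c ^ 2 + s ^ 2 = 1 /\ vertex a c s = p.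
Proof.
  destruct p as [x y]; intros ha hp.
  destruct (side_of_exists a x y ha hp) as [r h].
  destruct (side_of_rot60 a x y r h) as [hr [qx [qy [wx [wy [hq [hw [n [e1 e2]]]]]]]]].
  apply (vertex_of_triangle a x y qx qy wx wy); auto.
  intro e. injection e as -> ->. nra.
Qed.

Lemma s_eq_side_len a p : 1 < a -> a <= sqrt 2 -> onY a p ->
  exists c s, c ^ 2 + s ^ 2 = 1 /\ p = vertex a c s /\ Defs.s a p = side_len a c s.
Proof.
  intros ha1 ha2 hp. destruct (onY_vertex a p ha1 hp) as [c [s [u <-]]].
  exists c, s. repeat split; auto. apply s_vertex; auto.
Qed.

Lemma vertex_den_unit a c s : 1 < a -> c ^ 2 + s ^ 2 = 1 ->
  vertex_den a c s = (a ^ 2 + 3) ^ 2 / 4 - (a ^ 2 - 1) ^ 3 / (4 * a ^ 2) * cube_im c s ^ 2.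
Proof.
  intros ha u. unfold vertex_den.
  replace (cube_re c s ^ 2) with (1 - cube_im c s ^ 2)
    by (pose proof (cube_norm c s) as E; rewrite u in E; lra).
  field. lra.
Qed.

Lemma side_len_lt a c s c' s' : 1 < a -> c ^ 2 + s ^ 2 = 1 -> c' ^ 2 + s' ^ 2 = 1 ->
  cube_im c s ^ 2 < cube_im c' s' ^ 2 -> side_len a c s < side_len a c' s'.
Proof.
  intros ha u u' h. unfold side_len, vertex_scale.
  assert (vertex_den a c' s' < vertex_den a c s).
  { rewrite !vertex_den_unit by auto.
    assert (0 < (a ^ 2 - 1) ^ 3 / (4 * a ^ 2))
      by (apply Rdiv_lt_0_compat; [apply pow_lt|]; nra).
    nra. }
  pose proof (vertex_den_pos a c' s' ha).
  assert (0 < sqrt (vertex_den a c' s')) by (apply sqrt_lt_R0; auto).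
  apply Rmult_lt_compat_l.
  - pose proof sqrt3_pos. repeat apply Rmult_lt_0_compat; lra.
  - apply Rinv_lt_contravar.
    + apply Rmult_lt_0_compat; auto. apply sqrt_lt_R0; lra.
    + apply sqrt_lt_1; lra.
Qed.

Lemma side_len_le a c s c' s' : 1 < a -> c ^ 2 + s ^ 2 = 1 -> c' ^ 2 + s' ^ 2 = 1 ->
  cube_im c s ^ 2 <= cube_im c' s' ^ 2 -> side_len a c s <= side_len a c' s'.
Proof.
  intros ha u u' h. destruct (Rle_lt_or_eq_dec _ _ h) as [lt|eq].
  - apply Rlt_le, side_len_lt; auto.
  - unfold side_len, vertex_scale. rewrite !vertex_den_unit, eq by auto. lra.
Qed.

Lemma vertex_scale_im0 a c s : 1 < a -> c ^ 2 + s ^ 2 = 1 -> cube_im c s = 0 ->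
  vertex_scale a c s = 2 / (a ^ 2 + 3).
Proof.
  intros ha u h. unfold vertex_scale. rewrite vertex_den_unit, h by auto.
  replace ((a ^ 2 + 3) ^ 2 / 4 - (a ^ 2 - 1) ^ 3 / (4 * a ^ 2) * 0 ^ 2)
    with (((a ^ 2 + 3) / 2) ^ 2) by (field; lra).
  rewrite sqrt_pow2 by nra. field. nra.
Qed.

Lemma vertex_scale_re0 a c s : 1 < a -> c ^ 2 + s ^ 2 = 1 -> cube_re c s = 0 ->
  vertex_scale a c s = 2 * a / (3 * a ^ 2 + 1).
Proof.
  intros ha u h. unfold vertex_scale. rewrite vertex_den_unit by auto.
  replace (cube_im c s ^ 2) with 1 by (pose proof (cube_norm c s) as E; rewrite u, h in E; lra).
  replace ((a ^ 2 + 3) ^ 2 / 4 - (a ^ 2 - 1) ^ 3 / (4 * a ^ 2) * 1)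
    with (((3 * a ^ 2 + 1) / (2 * a)) ^ 2) by (field; lra).
  rewrite sqrt_pow2 by (apply Rlt_le, Rdiv_lt_0_compat; nra). field. split; nra.
Qed.

Lemma side_len_im0 a c s : 1 < a -> c ^ 2 + s ^ 2 = 1 -> cube_im c s = 0 ->
  side_len a c s = r1 a.
Proof. intros ha u h. unfold side_len, r1. rewrite vertex_scale_im0 by auto. field. nra. Qed.

Lemma side_len_re0 a c s : 1 < a -> c ^ 2 + s ^ 2 = 1 -> cube_re c s = 0 ->
  side_len a c s = r2 a.
Proof. intros ha u h. unfold side_len, r2. rewrite vertex_scale_re0 by auto. field. nra. Qed.

Lemma side_len_bounds a c s : 1 < a -> c ^ 2 + s ^ 2 = 1 -> r1 a <= side_len a c s <= r2 a.
Proof.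
  intros ha u. split.
  - rewrite <- (side_len_im0 a 1 0) by (auto; unfold cube_im; ring).
    apply side_len_le; auto; [ring|]. unfold cube_im at 1. ring_simplify. apply pow2_ge_0.
  - rewrite <- (side_len_re0 a 0 1) by (auto; unfold cube_re; ring).
    apply side_len_le; auto; [ring|].
    pose proof (cube_norm c s) as E. rewrite u in E. pose proof (pow2_ge_0 (cube_re c s)).
    unfold cube_im at 2. lra.
Qed.

Lemma vertex_im0 a c s : 1 < a -> c ^ 2 + s ^ 2 = 1 -> cube_im c s = 0 ->
  vertex a c s = (- (a * ((a ^ 2 - 1) * cube_re c s + 4 * c)) / (a ^ 2 + 3),
                  4 * a * s / (a ^ 2 + 3)).
Proof.
  intros ha u h. unfold vertex, vertex_cx, vertex_cy.
  rewrite vertex_scale_im0, h by auto. f_equal; field; nra.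
Qed.

Lemma vertex_re0 a c s : 1 < a -> c ^ 2 + s ^ 2 = 1 -> cube_re c s = 0 ->
  vertex a c s = (- (4 * a ^ 2 * c) / (3 * a ^ 2 + 1),
                  ((a ^ 2 - 1) * cube_im c s + 4 * a ^ 2 * s) / (3 * a ^ 2 + 1)).
Proof.
  intros ha u h. unfold vertex, vertex_cx, vertex_cy.
  rewrite vertex_scale_re0, h by auto. f_equal; field; repeat split; nra.
Qed.

Lemma sqr_cases x v : x ^ 2 = v ^ 2 -> x = v \/ x = - v.
Proof. rewrite <- !Rsqr_pow2. apply Rsqr_eq. Qed.

Lemma unit_cube_im0 c s : c ^ 2 + s ^ 2 = 1 -> cube_im c s = 0 ->
  (c = 1 \/ c = -1) /\ s = 0 \/ (c = 1/2 \/ c = - (1/2)) /\ (s = h3 \/ s = - h3).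
Proof.
  unfold cube_im; intros u h.
  assert (E : s * (3 * c ^ 2 - s ^ 2) = 0) by (rewrite <- h; ring).
  destruct (Rmult_integral _ _ E) as [->|e]; [left|right]; split; auto.
  - apply sqr_cases. lra.
  - apply sqr_cases. lra.
  - apply sqr_cases. replace (h3 ^ 2) with (3 / 4) by field [sqrt3_sqr]. lra.
Qed.

Lemma unit_cube_re0 c s : c ^ 2 + s ^ 2 = 1 -> cube_re c s = 0 ->
  c = 0 /\ (s = 1 \/ s = -1) \/ (c = h3 \/ c = - h3) /\ (s = 1/2 \/ s = - (1/2)).
Proof.
  unfold cube_re; intros u h.
  assert (E : c * (c ^ 2 - 3 * s ^ 2) = 0) by (rewrite <- h; ring).
  destruct (Rmult_integral _ _ E) as [->|e]; [left|right]; split; auto.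
  - apply sqr_cases. lra.
  - apply sqr_cases. replace (h3 ^ 2) with (3 / 4) by field [sqrt3_sqr]. lra.
  - apply sqr_cases. lra.
Qed.

Ltac solve_some_disjunct tac :=
  first [left; solve [tac] | right; solve_some_disjunct tac | solve [tac]].

Ltac solve_vertex_eq := f_equal; field [sqrt3_sqr]; nra.

Lemma min_vertex_iff a p : 1 < a ->
  min_vertex a p <-> exists c s, c ^ 2 + s ^ 2 = 1 /\ cube_im c s = 0 /\ vertex a c s = p.
Proof.
  intro ha. split.
  - unfold min_vertex.
    intros [-> | [-> | [-> | [-> | [-> | ->]]]]];
      [exists (-1), 0 | exists (1/2), h3 | exists (1/2), (- h3)
      | exists 1, 0 | exists (- (1/2)), h3 | exists (- (1/2)), (- h3)];
      match goal with |- ?c ^ 2 + ?s ^ 2 = 1 /\ _ =>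
        assert (u : c ^ 2 + s ^ 2 = 1) by field [sqrt3_sqr];
        assert (h : cube_im c s = 0) by (unfold cube_im; field [sqrt3_sqr]);
        refine (conj u (conj h _));
        rewrite vertex_im0 by auto; unfold cube_re; solve_vertex_eq
      end.
  - intros [c [s [u [h <-]]]]. rewrite vertex_im0 by auto. unfold min_vertex, cube_re.
    destruct (unit_cube_im0 c s u h) as [[[-> | ->] ->] | [[-> | ->] [-> | ->]]];
      solve_some_disjunct solve_vertex_eq.
Qed.

Lemma max_vertex_iff a p : 1 < a ->
  max_vertex a p <-> exists c s, c ^ 2 + s ^ 2 = 1 /\ cube_re c s = 0 /\ vertex a c s = p.
Proof.
  intro ha. split.
  - unfold max_vertex.
    intros [-> | [-> | [-> | [-> | [-> | ->]]]]];
      [exists 0, 1 | exists (- h3), (- (1/2)) | exists h3, (- (1/2))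
      | exists 0, (-1) | exists (- h3), (1/2) | exists h3, (1/2)];
      match goal with |- ?c ^ 2 + ?s ^ 2 = 1 /\ _ =>
        assert (u : c ^ 2 + s ^ 2 = 1) by field [sqrt3_sqr];
        assert (h : cube_re c s = 0) by (unfold cube_re; field [sqrt3_sqr]);
        refine (conj u (conj h _));
        rewrite vertex_re0 by auto; unfold cube_im; solve_vertex_eq
      end.
  - intros [c [s [u [h <-]]]]. rewrite vertex_re0 by auto. unfold max_vertex, cube_im.
    destruct (unit_cube_re0 c s u h) as [[-> [-> | ->]] | [[-> | ->] [-> | ->]]];
      solve_some_disjunct solve_vertex_eq.
Qed.

Lemma continuity_pt_near f x eps : continuity_pt f x -> 0 < eps ->
  exists d, 0 < d /\ forall y, Rabs (y - x) < d -> Rabs (f y - f x) < eps.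
Proof.
  intros hc he. destruct (hc eps he) as [d [hd H]]. exists d. split; auto. intros y hy.
  destruct (Req_dec y x) as [->|hne]; [rewrite Rminus_diag, Rabs_R0; auto|].
  apply H. split; [split; [exact I | auto] | exact hy].
Qed.

Lemma continuity_pt_inv_sqrt f x : continuity_pt f x -> 0 < f x ->
  continuity_pt (fun y => / sqrt (f y)) x.
Proof.
  intros hc hp. change (fun y => / sqrt (f y)) with (/ (comp sqrt f))%F.
  apply continuity_pt_inv.
  - apply continuity_pt_comp; auto. apply continuity_pt_sqrt; lra.
  - apply Rgt_not_eq, sqrt_lt_R0; auto.
Qed.

Lemma dist_lt_of_coords px py qx qy e : 0 < e ->
  Rabs (qx - px) < e / 2 -> Rabs (qy - py) < e / 2 -> Defs.dist (px, py) (qx, qy) < e.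
Proof.
  intros he h1 h2. unfold Defs.dist; cbn [fst snd].
  rewrite <- (sqrt_pow2 e) by lra. apply sqrt_lt_1.
  - apply Rplus_le_le_0_compat; apply pow2_ge_0.
  - apply pow2_ge_0.
  - rewrite <- (pow2_abs (px - qx)), <- (pow2_abs (py - qy)), Rabs_minus_sym,
      (Rabs_minus_sym py).
    pose proof (Rabs_pos (qx - px)). pose proof (Rabs_pos (qy - py)). nra.
Qed.

Definition turn_x (c s h : R) : R := rotx (cos h) (sin h) c s.
Definition turn_y (c s h : R) : R := roty (cos h) (sin h) c s.

Lemma turn_0 c s : turn_x c s 0 = c /\ turn_y c s 0 = s.
Proof. unfold turn_x, turn_y, rotx, roty. rewrite cos_0, sin_0. split; ring. Qed.

Lemma turn_norm c s h : turn_x c s h ^ 2 + turn_y c s h ^ 2 = c ^ 2 + s ^ 2.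
Proof.
  unfold turn_x, turn_y. rewrite rot_norm.
  replace (cos h ^ 2 + sin h ^ 2) with 1; [ring|].
  rewrite Rplus_comm, <- !Rsqr_pow2, sin2_cos2. reflexivity.
Qed.

Lemma vertex_turn_near a c s eps : 1 < a -> 0 < eps ->
  exists d, 0 < d /\ forall h, Rabs h < d ->
    Defs.dist (vertex a c s) (vertex a (turn_x c s h) (turn_y c s h)) < eps.
Proof.
  intros ha he.
  assert (cs : continuity_pt
                 (fun h => vertex_scale a (turn_x c s h) (turn_y c s h)) 0).
  { apply (continuity_pt_inv_sqrt (fun h => vertex_den a (turn_x c s h) (turn_y c s h))).
    - unfold vertex_den, cube_re, cube_im, turn_x, turn_y, rotx, roty. reg.
    - apply vertex_den_pos; auto. }
  assert (cx : continuity_pt (fun h => fst (vertex a (turn_x c s h) (turn_y c s h))) 0).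
  { unfold vertex; cbn [fst]. apply (continuity_pt_mult _ _ _ cs).
    unfold vertex_cx, cube_re, turn_x, turn_y, rotx, roty. reg. }
  assert (cy : continuity_pt (fun h => snd (vertex a (turn_x c s h) (turn_y c s h))) 0).
  { unfold vertex; cbn [snd]. apply (continuity_pt_mult _ _ _ cs).
    unfold vertex_cy, cube_im, turn_x, turn_y, rotx, roty. reg. }
  destruct (continuity_pt_near _ _ (eps / 2) cx ltac:(lra)) as [d1 [hd1 D1]].
  destruct (continuity_pt_near _ _ (eps / 2) cy ltac:(lra)) as [d2 [hd2 D2]].
  exists (Rmin d1 d2). split; [apply Rmin_glb_lt; auto|]. intros h hh.
  specialize (D1 h ltac:(rewrite Rminus_0_r; pose proof (Rmin_l d1 d2); lra)).
  specialize (D2 h ltac:(rewrite Rminus_0_r; pose proof (Rmin_r d1 d2); lra)).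
  destruct (turn_0 c s) as [e1 e2]. cbv beta in D1, D2. rewrite e1, e2 in D1, D2.
  destruct (vertex a c s), (vertex a (turn_x c s h) (turn_y c s h)).
  apply dist_lt_of_coords; auto.
Qed.

Lemma cube_im_turn_sqr c s h :
  cube_im (turn_x c s h) (turn_y c s h) ^ 2 - cube_im c s ^ 2 =
  cube_im (cos h) (sin h) * ((cube_re c s ^ 2 - cube_im c s ^ 2) * cube_im (cos h) (sin h)
                             + 2 * cube_im c s * cube_re c s * cube_re (cos h) (sin h)).
Proof.
  unfold turn_x, turn_y. rewrite cube_im_rot.
  assert (E : cube_re (cos h) (sin h) ^ 2 + cube_im (cos h) (sin h) ^ 2 = 1).
  { rewrite cube_norm, Rplus_comm, <- !Rsqr_pow2, sin2_cos2. ring. }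
  replace (cube_im c s ^ 2)
    with (cube_im c s ^ 2 * (cube_re (cos h) (sin h) ^ 2 + cube_im (cos h) (sin h) ^ 2)) at 1
    by (rewrite E; ring).
  ring.
Qed.

Lemma cube_im_angle_pos h : 0 < h < 1 -> 0 < cube_im (cos h) (sin h).
Proof.
  intros [h0 h1]. pose proof PI2_3_2.
  assert (sp : 0 < sin h) by (apply sin_gt_0; lra).
  assert (cp : 1 / 2 < cos h) by (rewrite <- cos_PI3; apply cos_decreasing_1; lra).
  pose proof (sin2_cos2 h) as E. unfold Rsqr in E.
  replace (cube_im (cos h) (sin h)) with (sin h * (4 * cos h ^ 2 - 1)) by (unfold cube_im; nra).
  apply Rmult_lt_0_compat; nra.
Qed.

Lemma cube_im_sqr_not_extremal c s d : cube_re c s * cube_im c s <> 0 -> 0 < d ->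
  exists h1 h2, Rabs h1 < d /\ Rabs h2 < d /\
    cube_im (turn_x c s h1) (turn_y c s h1) ^ 2 < cube_im c s ^ 2 <
    cube_im (turn_x c s h2) (turn_y c s h2) ^ 2.
Proof.
  intros hcs hd.
  set (G := fun h => (cube_re c s ^ 2 - cube_im c s ^ 2) * cube_im (cos h) (sin h)
                     + 2 * cube_im c s * cube_re c s * cube_re (cos h) (sin h)).
  assert (hG0 : G 0 <> 0).
  { unfold G. rewrite cos_0, sin_0.
    replace (cube_im 1 0) with 0 by (unfold cube_im; ring).
    replace (cube_re 1 0) with 1 by (unfold cube_re; ring).
    intro e. apply hcs. lra. }
  assert (cG : continuity_pt G 0) by (unfold G, cube_re, cube_im; reg).
  destruct (continuity_pt_near G 0 (Rabs (G 0)) cG (Rabs_pos_lt _ hG0)) as [d' [hd' D]].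
  (* For small |h|, G h has the sign of G 0, while the factor cube_im (cos h) (sin h)
     is odd in h. *)
  set (h0 := Rmin (Rmin d d') 1 / 2).
  assert (hh0 : 0 < h0 < 1)
    by (unfold h0; pose proof (Rmin_r (Rmin d d') 1);
        assert (0 < Rmin (Rmin d d') 1) by (repeat apply Rmin_glb_lt; lra); lra).
  assert (hsmall : forall h, Rabs h = h0 -> Rabs h < d /\ 0 < G h * G 0).
  { intros h eh.
    pose proof (Rmin_l (Rmin d d') 1). pose proof (Rmin_l d d'). pose proof (Rmin_r d d').
    split; [unfold h0 in eh; lra|].
    specialize (D h ltac:(rewrite Rminus_0_r; unfold h0 in eh; lra)).
    destruct (Rabs_def2 _ _ D) as [Da Db].
    destruct (Rle_lt_dec 0 (G 0)).
    - rewrite Rabs_right in Da, Db by lra. nra.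
    - rewrite Rabs_left in Da, Db by lra. nra. }
  destruct (hsmall h0) as [hp Gp]; [apply Rabs_right; lra|].
  destruct (hsmall (- h0)) as [hm Gm]; [rewrite Rabs_Ropp; apply Rabs_right; lra|].
  pose proof (cube_im_turn_sqr c s h0) as Dp. pose proof (cube_im_turn_sqr c s (- h0)) as Dm.
  fold (G h0) in Dp. fold (G (- h0)) in Dm.
  replace (cube_im (cos (- h0)) (sin (- h0))) with (- cube_im (cos h0) (sin h0)) in Dm
    by (rewrite cos_neg, sin_neg; unfold cube_im; ring).
  pose proof (cube_im_angle_pos h0 hh0).
  destruct (Rle_lt_dec 0 (G 0)).
  - exists (- h0), h0. repeat split; auto; nra.
  - exists h0, (- h0). repeat split; auto; nra.
Qed.

Lemma s_not_locally_extremal a c s eps : 1 < a -> a <= sqrt 2 -> c ^ 2 + s ^ 2 = 1 ->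
  cube_re c s * cube_im c s <> 0 -> 0 < eps ->
  exists q1 q2, onY a q1 /\ onY a q2 /\
    Defs.dist (vertex a c s) q1 < eps /\ Defs.dist (vertex a c s) q2 < eps /\
    Defs.s a q1 < Defs.s a (vertex a c s) < Defs.s a q2.
Proof.
  intros ha1 ha2 u hcs he.
  destruct (vertex_turn_near a c s eps ha1 he) as [d [hd D]].
  destruct (cube_im_sqr_not_extremal c s d hcs hd) as [h1 [h2 [e1 [e2 [l1 l2]]]]].
  pose proof (turn_norm c s h1) as u1. pose proof (turn_norm c s h2) as u2. rewrite u in u1, u2.
  exists (vertex a (turn_x c s h1) (turn_y c s h1)), (vertex a (turn_x c s h2) (turn_y c s h2)).
  repeat split; try apply vertex_onY; auto; rewrite !s_vertex by auto; apply side_len_lt; auto.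
Qed.

Theorem mainTheorem18 (a : R) (ha1 : 1 < a) (ha2 : a <= sqrt 2) :
  (forall p, min_vertex a p ->
     onY a p /\ s a p = r1 a /\ is_global_min a p) /\
  (forall p, max_vertex a p ->
     onY a p /\ s a p = r2 a /\ is_global_max a p) /\
  (forall p, onY a p -> (is_local_min a p \/ is_local_max a p) ->
     min_vertex a p \/ max_vertex a p).
Proof.
  split; [|split].
  - intros p hp. destruct (proj1 (min_vertex_iff a p ha1) hp) as [c [d [u [h <-]]]].
    assert (hs : s a (vertex a c d) = r1 a) by (rewrite s_vertex, side_len_im0; auto).
    split; [apply vertex_onY; auto | split; [exact hs|]]. intros q hq.
    destruct (s_eq_side_len a q ha1 ha2 hq) as [c' [d' [u' [_ ->]]]].
    rewrite hs. apply side_len_bounds; auto.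
  - intros p hp. destruct (proj1 (max_vertex_iff a p ha1) hp) as [c [d [u [h <-]]]].
    assert (hs : s a (vertex a c d) = r2 a) by (rewrite s_vertex, side_len_re0; auto).
    split; [apply vertex_onY; auto | split; [exact hs|]]. intros q hq.
    destruct (s_eq_side_len a q ha1 ha2 hq) as [c' [d' [u' [_ ->]]]].
    rewrite hs. apply side_len_bounds; auto.
  - intros p hp hl. destruct (s_eq_side_len a p ha1 ha2 hp) as [c [d [u [-> _]]]].
    destruct (Req_dec (cube_re c d * cube_im c d) 0) as [z|nz].
    + destruct (Rmult_integral _ _ z) as [z'|z'];
        [right; apply max_vertex_iff | left; apply min_vertex_iff]; eauto.
    + exfalso.
      destruct hl as [[eps [he H]]|[eps [he H]]];
        destruct (s_not_locally_extremal a c d eps ha1 ha2 u nz he)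
          as [q1 [q2 [hq1 [hq2 [d1 [d2 [l1 l2]]]]]]];
        [specialize (H q1 hq1 d1) | specialize (H q2 hq2 d2)]; lra.
Qed.
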